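(* Let $m,n\ge 0$ be integers with $m-n\equiv 1\pmod 2$, put $N=m+n$ and $k=\frac{N-1}{2}$, and let $1<r<\infty$. Then $$\left(\frac{2}{r+1}+\binom{N}{k}^r+\sum_{\substack{j=0\\ j\ne k}}^{N-1}\frac{\binom{N}{j+1}^{r+1}-\binom{N}{j}^{r+1}}{(r+1)\left[\binom{N}{j+1}-\binom{N}{j}\right]}\right)^{1/r} \le 2^m\Big(\sum_{j=0}^{n}\binom{n}{j}^r\Big)^{1/r}.$$
   Context: Binomial coefficients have their usual meaning. *)

From HB Require Import structures.
From mathcomp Require Import all_boot all_order all_algebra.
From mathcomp Require Import all_classical all_reals all_analysis.

(* Write C j := 'C(N, j) and S_N := \sum_(j <= N) C j ^ r.  The proof compares
   the left-hand side with S_N and then S_N with 2^(m r) S_n: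

   1. Convexity of x |-> x ^ r (r >= 1), via the mean value theorem, gives the
      tangent-line inequality, the trapezoid bound
          (b^(r+1) - a^(r+1)) / ((r+1)(b-a)) <= (a^r + b^r) / 2,
      and the power-mean bound (a + b)^r <= 2^r (a^r + b^r) / 2.
   2. By the trapezoid bound, each quotient term of the left-hand side is at
      most (C j ^ r + C (j+1) ^ r) / 2; these averages telescope to S_N - 1.
      For odd N = 2k+1 the omitted index k has C k = C (k+1), so its average is
      exactly C k ^ r, and 2/(r+1) <= 1 absorbs the remaining constant.
   3. Pascal's rule and the power-mean bound give S_(n+1) <= 2^r S_n, hence
      S_(n+m) <= (2^m)^r S_n; taking r-th roots concludes. *)

From HB Require Import structures.
From mathcomp Require Import all_boot all_order all_algebra.
From mathcomp Require Import all_classical all_reals all_analysis.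
From mathcomp Require Import ring lra zify.
Import Order.TTheory GRing.Theory Num.Theory.
Local Open Scope ring_scope.

Section Convexity.
Context {R : realType}.
Implicit Types r a b c : R.

Lemma mvt_pos (f df : R -> R) a b : 0 < a -> a < b ->
  (forall x : R, 0 < x -> is_derive x (1 : R) f (df x)) ->
  exists2 c, a < c < b & f b - f a = df c * (b - a).
Proof.
move=> a_gt0 ab fd.
have fd_in x : x \in `]a, b[ -> is_derive x 1 f (df x).
  by rewrite in_itv /= => /andP[ax _]; apply: fd; apply: lt_trans ax.
have f_derivable : {in `[a, b], forall x, derivable f x 1}.
  move=> x; rewrite in_itv /= => /andP[ax _].
  by have [] := fd x (lt_le_trans a_gt0 ax).
have [c cab E] := MVT ab fd_in (derivable_within_continuous f_derivable).
by exists c => //; move: cab; rewrite in_itv.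
Qed.

Lemma powR_tangent_le r a c : 1 <= r -> 0 <= a -> 0 < c ->
  c `^ r + r * c `^ (r - 1) * (a - c) <= a `^ r.
Proof.
move=> r_ge1 a_ge0 c_gt0.
have r_gt0 : 0 < r by rewrite (lt_le_trans ltr01).
have r1_ge0 : 0 <= r - 1 by rewrite subr_ge0.
have D (x : R) : 0 < x -> is_derive x 1 (@powR R ^~ r) (r * x `^ (r - 1)).
  by move=> x_gt0; apply: is_derive1_powR.
have powR_r1_le (x y : R) : 0 < x -> x <= y -> x `^ (r - 1) <= y `^ (r - 1).
  move=> x_gt0 xy; have y_gt0 := lt_le_trans x_gt0 xy.
  by apply: ge0_ler_powR; rewrite // nnegrE ltW.
case: (ltgtP a c) => [ac|ca|->]; last by rewrite subrr mulr0 addr0.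
- have [->|a_neq0] := eqVneq a 0.
    rewrite powR0 ?gt_eqF// sub0r mulrN -mulrA (mulrC _ c) (mulr_powRB1 (ltW c_gt0) r_gt0).
    rewrite -[X in X - _]mul1r -mulrBl.
    by apply: mulr_le0_ge0; rewrite ?powR_ge0// subr_le0.
  have a_gt0 : 0 < a by rewrite lt_neqAle eq_sym a_neq0.
  have [d /andP[ad dc] E] := mvt_pos _ _ _ _ a_gt0 ac D.
  have -> : a `^ r = c `^ r - r * d `^ (r - 1) * (c - a) by rewrite -E opprB addrC subrK.
  rewrite lerD2l -mulrN opprB ler_nM2r ?subr_lt0// ler_pM2l//.
  by apply: powR_r1_le; rewrite ?ltW // (lt_trans a_gt0).
- have [d /andP[cd da] E] := mvt_pos _ _ _ _ c_gt0 ca D.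
  have -> : a `^ r = c `^ r + r * d `^ (r - 1) * (a - c) by rewrite -E addrC subrK.
  by rewrite lerD2l ler_pM2r ?subr_gt0// ler_pM2l// powR_r1_le ?ltW.
Qed.

(* Trapezoid rule for the convex integrand x ^ r on [a, b]: the integral
   (b^(r+1) - a^(r+1)) / (r+1) is at most (b - a)(a^r + b^r) / 2. *)
Lemma powR_trapezoid r a b : 1 <= r -> 0 < a -> a < b ->
  b `^ (r + 1) - a `^ (r + 1) <= (r + 1) * (b - a) * (a `^ r + b `^ r) / 2.
Proof.
move=> r_ge1 a_gt0 ab.
pose F := (2^-1 * (r + 1)) \*: ((@id R - cst a) * (cst (a `^ r) + @powR R ^~ r))
          - @powR R ^~ (r + 1).
pose dF (x : R) := 2^-1 * (r + 1) * (a `^ r - x `^ r + r * x `^ (r - 1) * (x - a)).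
have D (x : R) : 0 < x -> is_derive x 1 F (dF x).
  move=> x_gt0.
  have := is_derive1_powR r x_gt0; have := is_derive1_powR (r + 1) x_gt0.
  move=> P2 P1; apply: is_derive_eq.
  by rewrite /= /GRing.scale /= addrK !fctE /= /dF; field.
have [c /andP[ac cb] E] := mvt_pos _ _ _ _ a_gt0 ab D.
have dF_ge0 : 0 <= dF c.
  rewrite /dF mulr_ge0 //; first by rewrite mulr_ge0 // ?invr_ge0 //; lra.
  have := @powR_tangent_le r a c r_ge1 (ltW a_gt0) (lt_trans a_gt0 ac).
  rewrite -[a - c]opprB mulrN; lra.
have : 0 <= F b - F a by rewrite E mulr_ge0 // subr_ge0 ltW.
rewrite /F !fctE /= subrr !mul0r /GRing.scale /= mulr0; nra.
Qed.

(* The difference quotient of x ^ (r+1) / (r+1) between two positive points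
   (defined as 0 when they coincide) is at most the average of the values of
   x ^ r at these points. *)
Lemma powR_quotient_le_mean r a b : 1 <= r -> 0 < a -> 0 < b ->
  (b `^ (r + 1) - a `^ (r + 1)) / ((r + 1) * (b - a)) <= (a `^ r + b `^ r) / 2.
Proof.
move=> r_ge1 a_gt0 b_gt0.
have r1_gt0 : 0 < r + 1 by lra.
case: (ltgtP a b) => [ab|ba|->].
- rewrite ler_pdivrMr ?mulr_gt0 ?subr_gt0 //.
  have := @powR_trapezoid r a b r_ge1 a_gt0 ab; nra.
- rewrite -(opprB a b) -(opprB (a `^ (r + 1))) mulrN invrN mulrNN.
  rewrite ler_pdivrMr ?mulr_gt0 ?subr_gt0 //.
  have := @powR_trapezoid r b a r_ge1 b_gt0 ba; nra.
- by rewrite !subrr mulr0 invr0 mulr0 divr_ge0 ?addr_ge0 ?powR_ge0.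
Qed.

Lemma powR_quotient_ge0 r a b : 1 <= r -> 0 <= a -> 0 <= b ->
  0 <= (b `^ (r + 1) - a `^ (r + 1)) / ((r + 1) * (b - a)).
Proof.
move=> r_ge1 a_ge0 b_ge0.
have r1_gt0 : 0 < r + 1 by lra.
have incr (x y : R) : 0 <= x -> 0 <= y -> x < y -> x `^ (r + 1) <= y `^ (r + 1).
  by move=> x_ge0 y_ge0 xy; rewrite ltW // gt0_ltr_powR.
case: (ltgtP a b) => [ab|ba|->]; last by rewrite !subrr mulr0 invr0 mulr0.
- by rewrite divr_ge0 ?subr_ge0 ?incr // mulr_ge0 ?subr_ge0 ?ltW.
- rewrite -(opprB a b) -(opprB (a `^ (r + 1))) mulrN invrN mulrNN.
  by rewrite divr_ge0 ?subr_ge0 ?incr // mulr_ge0 ?subr_ge0 ?ltW.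
Qed.

(* Power-mean inequality ((a + b) / 2) ^ r <= (a ^ r + b ^ r) / 2, multiplied
   by 2 ^ r; it follows from two tangent-line inequalities at (a + b) / 2. *)
Lemma powR_add_le r a b : 1 <= r -> 0 <= a -> 0 <= b ->
  (a + b) `^ r <= 2 `^ r * ((a `^ r + b `^ r) / 2).
Proof.
move=> r_ge1 a_ge0 b_ge0.
have r_gt0 : 0 < r by lra.
have [ab0|ab_neq0] := eqVneq (a + b) 0.
  by rewrite ab0 powR0 ?gt_eqF // mulr_ge0 ?powR_ge0 ?divr_ge0 ?addr_ge0 ?powR_ge0.
set c := (a + b) / 2.
have c_gt0 : 0 < c by rewrite divr_gt0 // lt_neqAle eq_sym ab_neq0 addr_ge0.
have -> : a + b = 2 * c by rewrite /c; field.
rewrite powRM // ?(ltW c_gt0) // ler_pM2l ?powR_gt0 // ler_pdivlMr //.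
have := @powR_tangent_le r a c r_ge1 a_ge0 c_gt0.
have := @powR_tangent_le r b c r_ge1 b_ge0 c_gt0.
have : a - c + (b - c) = 0 by rewrite /c; field.
nra.
Qed.

End Convexity.

Lemma odd_middle_index N : odd N -> N = (((N - 1) %/ 2).*2.+1)%N.
Proof.
move=> N_odd; have hN : N = N./2.*2.+1.
  by have := odd_double_half N; rewrite N_odd add1n => ->.
by rewrite {2}hN subn1 /= divn2 doubleK.
Qed.

Lemma binom_odd_middle k : 'C(k.*2.+1, k.+1) = 'C(k.*2.+1, k).
Proof.
have -> : k.+1 = (k.*2.+1 - k)%N by rewrite -addnn; lia.
by rewrite bin_sub // -addnn; lia.
Qed.

Section BinomialPowerSums.
Context {R : realType} (r : R).
Hypothesis r_ge1 : 1 <= r.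

Definition binom_pow_sum (n : nat) : R :=
  \sum_(0 <= j < n.+1) ('C(n, j)%:R : R) `^ r.

Let r_gt0 : 0 < r := lt_le_trans ltr01 r_ge1.

Lemma binom_pow_sum_ge0 n : 0 <= binom_pow_sum n.
Proof. by rewrite sumr_ge0 // => j _; rewrite powR_ge0. Qed.

Lemma binom_pow_sum_init n :
  \sum_(0 <= j < n) ('C(n, j)%:R : R) `^ r = binom_pow_sum n - 1.
Proof. by rewrite /binom_pow_sum big_nat_recr //= binn powR1 addrK. Qed.

Lemma binom_pow_sum_tail n :
  \sum_(0 <= j < n) ('C(n, j.+1)%:R : R) `^ r = binom_pow_sum n - 1.
Proof. by rewrite /binom_pow_sum big_nat_recl //= bin0 powR1 addrC addKr. Qed.

(* By Pascal's rule and the power-mean inequality, S_(n+1) <= 2 ^ r S_n. *)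
Lemma binom_pow_sum_succ_le n : binom_pow_sum n.+1 <= 2 `^ r * binom_pow_sum n.
Proof.
rewrite /binom_pow_sum big_nat_recl // bin0 powR1.
under eq_bigr => j _ do rewrite binS natrD.
rewrite -/(binom_pow_sum n).
have pascal_le : \sum_(0 <= i < n.+1) ('C(n, i.+1)%:R + 'C(n, i)%:R : R) `^ r <=
    2 `^ r * ((\sum_(0 <= i < n.+1) ('C(n, i.+1)%:R : R) `^ r + binom_pow_sum n) / 2).
  rewrite /binom_pow_sum -big_split /= mulr_suml mulr_sumr.
  by apply: ler_sum => i _; apply: powR_add_le; rewrite ?ler0n.
have shifted : \sum_(0 <= i < n.+1) ('C(n, i.+1)%:R : R) `^ r = binom_pow_sum n - 1.
  by rewrite big_nat_recr //= bin_small // powR0 ?gt_eqF // addr0 binom_pow_sum_tail.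
have two_le : 2 <= 2 `^ r by rewrite -{1}(@powRr1 _ 2) // ler_powR // ler1n.
have := binom_pow_sum_ge0 n.
rewrite shifted in pascal_le; nra.
Qed.

Lemma binom_pow_sum_add_le n m : binom_pow_sum (n + m) <= (2 ^+ m) `^ r * binom_pow_sum n.
Proof.
elim: m => [|m IH]; first by rewrite addn0 expr0 powR1 mul1r.
rewrite addnS exprS powRM // ?exprn_ge0 // -mulrA.
by apply: le_trans (binom_pow_sum_succ_le _) _; rewrite ler_pM2l ?powR_gt0.
Qed.

Lemma binom_pow_mean_sum N :
  \sum_(0 <= j < N) (('C(N, j)%:R : R) `^ r + ('C(N, j.+1)%:R : R) `^ r) / 2
  = binom_pow_sum N - 1.
Proof.
by rewrite -mulr_suml big_split /= binom_pow_sum_init binom_pow_sum_tail; field.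
Qed.

Lemma quotient_sum_le_binom_pow_sum N k : N = k.*2.+1 ->
  2 / (r + 1) + ('C(N, k)%:R : R) `^ r
  + \sum_(0 <= j < N | j != k)
      ((('C(N, j.+1)%:R : R) `^ (r + 1) - ('C(N, j)%:R : R) `^ (r + 1))
       / ((r + 1) * ('C(N, j.+1)%:R - 'C(N, j)%:R)))
  <= binom_pow_sum N.
Proof.
move=> hN.
set C := fun j => ('C(N, j)%:R : R).
set mean := fun j => (C j `^ r + C j.+1 `^ r) / 2.
have k_lt_N : (k < N)%N by rewrite hN -addnn; lia.
have mean_k : mean k = C k `^ r by rewrite /mean /C hN binom_odd_middle; field.
have quotient_le : \sum_(0 <= j < N | j != k)
    (C j.+1 `^ (r + 1) - C j `^ (r + 1)) / ((r + 1) * (C j.+1 - C j))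
    <= \sum_(0 <= j < N | j != k) mean j.
  rewrite [X in X <= _]big_mkcond [X in _ <= X]big_mkcond /=.
  apply: ler_sum_nat => j /= jN; case: ifP => // _.
  by apply: powR_quotient_le_mean; rewrite // /C ltr0n bin_gt0 // ltnW.
have drop_k : \sum_(0 <= j < N | j != k) mean j = binom_pow_sum N - 1 - C k `^ r.
  have mean_sum : \sum_(0 <= j < N) mean j = binom_pow_sum N - 1.
    exact: binom_pow_mean_sum.
  rewrite -mean_sum [X in _ = X - _](@bigD1_seq _ _ _ _ _ k) /=.
  - by rewrite mean_k addrC addrK.
  - by rewrite mem_index_iota.
  - exact: iota_uniq.
have two_le : 2 / (r + 1) <= 1 by have r1 := r_ge1; rewrite ler_pdivrMr; lra.
rewrite -/(C k); lra.
Qed.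

End BinomialPowerSums.

Theorem mainTheorem13 (R : realType) (m n : nat) (r : R) :
  odd (m + n) -> 1 < r ->
  let N := (m + n)%N in
  let k := ((N - 1) %/ 2)%N in
  (2 / (r + 1) + ('C(N, k)%:R : R) `^ r
   + \sum_(0 <= j < N | j != k)
       ((('C(N, j.+1)%:R : R) `^ (r + 1) - ('C(N, j)%:R : R) `^ (r + 1))
        / ((r + 1) * ('C(N, j.+1)%:R - 'C(N, j)%:R)))) `^ (r^-1)
  <= 2 ^+ m * (\sum_(0 <= j < n.+1) ('C(n, j)%:R : R) `^ r) `^ (r^-1).
Proof.
move=> N_odd r_gt1; cbv zeta.
set N := (m + n)%N; set k := ((N - 1) %/ 2)%N.
have r_ge1 : 1 <= r by apply: ltW.
have N_eq : N = k.*2.+1 := @odd_middle_index N N_odd.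
have r_gt0 : 0 < r by lra.
set lhs := (X in X `^ _ <= _).
have lhs_ge0 : 0 <= lhs.
  rewrite !addr_ge0 ?divr_ge0 ?powR_ge0 ?sumr_ge0 //; try lra.
  by move=> j _; apply: powR_quotient_ge0; rewrite ?ler0n.
have lhs_le : lhs <= (2 ^+ m) `^ r * binom_pow_sum r n.
  apply: le_trans (@quotient_sum_le_binom_pow_sum _ r r_ge1 N k N_eq) _.
  by rewrite /N addnC binom_pow_sum_add_le.
have rhs_ge0 : 0 <= (2 ^+ m) `^ r * binom_pow_sum r n.
  by rewrite mulr_ge0 ?powR_ge0 ?binom_pow_sum_ge0.
have rinv_ge0 : 0 <= r^-1 by rewrite invr_ge0 ltW.
apply: le_trans (ge0_ler_powR _ _ _ lhs_le) _; rewrite ?nnegrE ?rinv_ge0 //.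
rewrite powRM ?powR_ge0 ?binom_pow_sum_ge0 // -powRrM mulfV ?gt_eqF //.
by rewrite powRr1 ?exprn_ge0.
Qed.
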